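(* Let $n\ge 3$ be an integer. (i) There exist a function $f:\mathbb{R}\to\mathbb{R}$ and a point $x$ such that the Peano derivative $f_{(n-1)}(x)$ exists and the $n$th symmetric Riemann derivative $D_n^sf(x)$ exists, but the Peano derivative $f_{(n)}(x)$ does not exist. (ii) There exist a function $f:\mathbb{R}\to\mathbb{R}$ and a point $x$ such that $f_{(2)}(x)$ exists and the third forward Riemann derivative $D_3f(x)$ exists, but $f_{(3)}(x)$ does not exist. *)

From Stdlib Require Import Reals Factorial Binomial.
Open Scope R_scope.

Definition peano_exists (k : nat) (f : R -> R) (x : R) : Prop :=
  exists a : nat -> R, a 0%nat = f x /\
    forall eps : R, 0 < eps -> exists delta : R, 0 < delta /\
      forall h : R, h <> 0 -> Rabs h < delta ->
        Rabs (f (x + h) - sum_f_R0 (fun j => a j * h ^ j / INR (fact j)) k)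
          <= eps * Rabs h ^ k.

Definition lim0_exists (g : R -> R) : Prop :=
  exists L : R, forall eps : R, 0 < eps -> exists delta : R, 0 < delta /\
    forall h : R, h <> 0 -> Rabs h < delta -> Rabs (g h - L) < eps.

Definition sym_diff (n : nat) (f : R -> R) (x h : R) : R :=
  sum_f_R0 (fun k => (-1) ^ k * C n k * f (x + (INR n / 2 - INR k) * h)) n.

Definition fwd_diff (n : nat) (f : R -> R) (x h : R) : R :=
  sum_f_R0 (fun k => (-1) ^ (n - k) * C n k * f (x + INR k * h)) n.

Definition sym_riemann_exists (n : nat) (f : R -> R) (x : R) : Prop :=
  lim0_exists (fun h => sym_diff n f x h / h ^ n).

Definition riemann_exists (n : nat) (f : R -> R) (x : R) : Prop :=
  lim0_exists (fun h => fwd_diff n f x h / h ^ n).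

(* (i) f(y) = y^(n-1)|y| satisfies f(-y) = -(-1)^n f(y), which makes every
   n-th symmetric difference at 0 vanish, while f(h)/h^n jumps from -1 to 1
   across 0.
   (ii) Let chi be (-1)^(a+b) on the numbers 2^a 3^b (a, b integers) and 0
   elsewhere, so that chi(2y) = chi(3y) = -chi(y).  For f(y) = y^3 chi(y) the
   third forward difference -f(0) + 3f(h) - 3f(2h) + f(3h) is
   h^3 chi(h) (3 + 24 - 27) = 0, while f(h)/h^3 = chi(h) takes both values
   1 and -1 on the powers of 1/2.
   In both cases |f(h)| <= |h|^n gives the (n-1)-st Peano derivative, and two
   distinct cluster values of f(h)/h^n rule out the n-th one. *)
From Stdlib Require Import Reals Lra Lia Factorial Binomial ClassicalEpsilon.
Open Scope R_scope.

Lemma pow_abs_S_le (h : R) (n : nat) : Rabs h < 1 -> Rabs h ^ S n <= Rabs h ^ n.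
Proof.
  intro h1. simpl. pose proof (Rabs_pos h).
  assert (0 <= Rabs h ^ n) by (apply pow_le, Rabs_pos). nra.
Qed.

Lemma coeff_eq0_of_bigO_pow_S (c C d : R) (n : nat) : 0 < d ->
  (forall h, h <> 0 -> Rabs h < d -> Rabs (c * h ^ n) <= C * Rabs h ^ S n) ->
  c = 0.
Proof.
  intros dpos H. destruct (Req_dec c 0) as [|cne]; [assumption|exfalso].
  pose proof (Rabs_pos_lt _ cne) as cpos. pose proof (Rabs_pos C).
  pose proof (Rmin_l (d / 2) (Rabs c / (2 * (Rabs C + 1)))) as hl.
  pose proof (Rmin_r (d / 2) (Rabs c / (2 * (Rabs C + 1)))) as hr.
  assert (hpos : 0 < Rmin (d / 2) (Rabs c / (2 * (Rabs C + 1))))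
    by (apply Rmin_pos; [lra | apply Rdiv_lt_0_compat; lra]).
  set (h := Rmin (d / 2) (Rabs c / (2 * (Rabs C + 1)))) in *.
  assert (hc : h * (2 * (Rabs C + 1)) <= Rabs c).
  { apply (Rmult_le_compat_r (2 * (Rabs C + 1))) in hr; [|lra].
    unfold Rdiv in hr. rewrite Rmult_assoc, Rinv_l in hr; lra. }
  specialize (H h ltac:(lra) ltac:(rewrite Rabs_pos_eq; lra)).
  rewrite Rabs_mult, <- RPow_abs, (Rabs_pos_eq h) in H by lra.
  assert (hn : 0 < h ^ n) by (apply pow_lt; lra).
  assert (Rabs c <= C * h) by (apply (Rmult_le_reg_r (h ^ n)); [|simpl in H]; nra).
  assert (C * h <= Rabs C * h) by (apply Rmult_le_compat_r; [lra | apply RRle_abs]).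
  nra.
Qed.

Lemma poly_bigO_pow_monomial (n : nat) : forall (b : nat -> R) (C d : R), 0 < d ->
  (forall h, h <> 0 -> Rabs h < d ->
     Rabs (sum_f_R0 (fun j => b j * h ^ j) n) <= C * Rabs h ^ n) ->
  forall h, sum_f_R0 (fun j => b j * h ^ j) n = b n * h ^ n.
Proof.
  induction n as [|n IH]; intros b C d dpos H; [reflexivity|].
  set (C' := Rabs C + Rabs (b (S n))).
  assert (d'pos : 0 < Rmin d 1) by (apply Rmin_pos; lra).
  assert (bound_S : forall h, h <> 0 -> Rabs h < Rmin d 1 ->
     Rabs (sum_f_R0 (fun j => b j * h ^ j) n) <= C' * Rabs h ^ S n).
  { intros h hn hd.
    assert (Rabs h < d) by (pose proof (Rmin_l d 1); lra).
    specialize (H h hn ltac:(assumption)). simpl sum_f_R0 in H.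
    rewrite tech_pow_Rmult in H.
    set (s := sum_f_R0 (fun j => b j * h ^ j) n) in *.
    replace s with ((s + b (S n) * h ^ S n) + - (b (S n) * h ^ S n)) by ring.
    eapply Rle_trans; [apply Rabs_triang|].
    rewrite Rabs_Ropp, Rabs_mult, <- RPow_abs.
    assert (0 <= Rabs h ^ S n) by (apply pow_le, Rabs_pos).
    assert (C * Rabs h ^ S n <= Rabs C * Rabs h ^ S n)
      by (apply Rmult_le_compat_r; [lra | apply RRle_abs]).
    unfold C'. lra. }
  assert (bound : forall h, h <> 0 -> Rabs h < Rmin d 1 ->
     Rabs (sum_f_R0 (fun j => b j * h ^ j) n) <= C' * Rabs h ^ n).
  { intros h hn hd. eapply Rle_trans; [apply bound_S; assumption|].
    apply Rmult_le_compat_l; [unfold C'; pose proof (Rabs_pos C);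
      pose proof (Rabs_pos (b (S n))); lra|].
    apply pow_abs_S_le. pose proof (Rmin_r d 1). lra. }
  pose proof (IH b C' _ d'pos bound) as E.
  assert (bn0 : b n = 0).
  { apply (coeff_eq0_of_bigO_pow_S _ C' _ n d'pos).
    intros h hn hd. rewrite <- E. apply bound_S; assumption. }
  intro h. simpl. rewrite E, bn0. ring.
Qed.

Lemma not_peano_exists_of_two_ratios (n : nat) (f : R -> R) (x K c1 c2 : R) :
  c1 <> c2 ->
  (forall h, h <> 0 -> Rabs h < 1 -> Rabs (f (x + h)) <= K * Rabs h ^ n) ->
  (forall d, 0 < d -> exists h, h <> 0 /\ Rabs h < d /\ f (x + h) = c1 * h ^ n) ->
  (forall d, 0 < d -> exists h, h <> 0 /\ Rabs h < d /\ f (x + h) = c2 * h ^ n) ->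
  ~ peano_exists n f x.
Proof.
  intros cne HK H1 H2 [a [_ Ha]].
  assert (cpos : 0 < Rabs (c1 - c2)) by (apply Rabs_pos_lt; lra).
  set (eps := Rabs (c1 - c2) / 4).
  destruct (Ha eps ltac:(unfold eps; lra)) as [d [dpos Hd]].
  set (b := fun j => a j / INR (fact j)).
  assert (Hs : forall h, sum_f_R0 (fun j => a j * h ^ j / INR (fact j)) n
                        = sum_f_R0 (fun j => b j * h ^ j) n).
  { intro h. apply sum_eq. intros i _. unfold b, Rdiv. ring. }
  assert (d'pos : 0 < Rmin d 1) by (apply Rmin_pos; lra).
  (* The Taylor polynomial is itself O(|h|^n) near 0, so only its top term survives. *)
  assert (E : forall h, sum_f_R0 (fun j => b j * h ^ j) n = b n * h ^ n).
  { apply (poly_bigO_pow_monomial n b (K + eps) _ d'pos).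
    intros h hn hd.
    assert (Rabs h < d) by (pose proof (Rmin_l d 1); lra).
    assert (Rabs h < 1) by (pose proof (Rmin_r d 1); lra).
    specialize (Hd h hn ltac:(assumption)). specialize (HK h hn ltac:(assumption)).
    rewrite Hs in Hd. set (p := sum_f_R0 (fun j => b j * h ^ j) n) in *.
    replace p with (f (x + h) + - (f (x + h) - p)) by ring.
    eapply Rle_trans; [apply Rabs_triang|]. rewrite Rabs_Ropp. lra. }
  assert (close : forall c,
      (forall d, 0 < d -> exists h, h <> 0 /\ Rabs h < d /\ f (x + h) = c * h ^ n) ->
      Rabs (c - b n) <= eps).
  { intros c Hc. destruct (Hc _ dpos) as [h [hn [hd hf]]].
    specialize (Hd h hn hd). rewrite Hs, E, hf in Hd.
    replace (c * h ^ n - b n * h ^ n) with ((c - b n) * h ^ n) in Hd by ring.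
    rewrite Rabs_mult, <- RPow_abs in Hd.
    assert (0 < Rabs h ^ n) by (apply pow_lt, Rabs_pos_lt; assumption).
    apply (Rmult_le_reg_r (Rabs h ^ n)); assumption. }
  pose proof (close _ H1). pose proof (close _ H2).
  assert (Rabs (c1 - c2) <= Rabs (c1 - b n) + Rabs (c2 - b n)).
  { replace (c1 - c2) with ((c1 - b n) + - (c2 - b n)) by ring.
    eapply Rle_trans; [apply Rabs_triang|]. rewrite Rabs_Ropp. lra. }
  unfold eps in *. lra.
Qed.

Lemma peano_exists_of_bigO_pow_S (k : nat) (f : R -> R) (x K : R) : f x = 0 ->
  (forall h, Rabs (f (x + h)) <= K * Rabs h ^ S k) -> peano_exists k f x.
Proof.
  intros fx HK. exists (fun _ => 0). split; [symmetry; assumption|].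
  intros eps epos. pose proof (Rabs_pos K).
  exists (eps / (Rabs K + 1)). split; [apply Rdiv_lt_0_compat; lra|].
  intros h _ hd.
  rewrite (sum_eq _ (fun _ => 0)) by (intros; unfold Rdiv; ring).
  rewrite sum_cte, Rmult_0_l, Rminus_0_r.
  eapply Rle_trans; [apply HK|]. simpl.
  assert (0 <= Rabs h ^ k) by (apply pow_le, Rabs_pos).
  assert (K * Rabs h <= eps).
  { apply (Rmult_lt_compat_r (Rabs K + 1)) in hd; [|lra].
    unfold Rdiv in hd. rewrite Rmult_assoc, Rinv_l in hd by lra.
    pose proof (RRle_abs K). pose proof (Rabs_pos h). nra. }
  nra.
Qed.

Lemma lim0_exists_of_eq0 (g : R -> R) : (forall h, g h = 0) -> lim0_exists g.
Proof.
  intro g0. exists 0. intros eps epos. exists 1. split; [lra|].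
  intros h _ _. rewrite g0, Rminus_0_r, Rabs_R0. assumption.
Qed.

Lemma sum_f_R0_rev (n : nat) : forall g : nat -> R,
  sum_f_R0 g n = sum_f_R0 (fun k => g (n - k)%nat) n.
Proof.
  induction n as [|n IH]; intro g; [reflexivity|].
  rewrite (decomp_sum (fun k => g (S n - k)%nat)) by lia. simpl pred.
  simpl sum_f_R0 at 1. rewrite Nat.sub_0_r.
  rewrite (sum_eq (fun i => g (S n - S i)%nat) (fun i => g (n - i)%nat))
    by reflexivity.
  rewrite <- IH. ring.
Qed.

Lemma sum_f_R0_antisym (n : nat) (g : nat -> R) :
  (forall k, (k <= n)%nat -> g (n - k)%nat = - g k) -> sum_f_R0 g n = 0.
Proof.
  intro H. assert (E : sum_f_R0 g n = - sum_f_R0 g n).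
  { rewrite sum_f_R0_rev at 1. rewrite (sum_eq _ (fun k => g k * -1)).
    - rewrite <- scal_sum. ring.
    - intros i hi. rewrite H by assumption. ring. }
  lra.
Qed.

Lemma pow_m1_sq (k : nat) : (-1) ^ k * (-1) ^ k = 1.
Proof. rewrite <- Rpow_mult_distr. replace (-1 * -1) with 1 by ring. apply pow1. Qed.

(* The terms k and n - k of the symmetric difference cancel. *)
Lemma sym_diff_eq0 (n : nat) (f : R -> R) (x h : R) :
  (forall y, f (x - y) = - ((-1) ^ n * f (x + y))) -> sym_diff n f x h = 0.
Proof.
  intro Hf. unfold sym_diff. apply sum_f_R0_antisym. intros k hk.
  rewrite <- pascal_step1, minus_INR by assumption.
  replace (x + (INR n / 2 - (INR n - INR k)) * h)
    with (x - (INR n / 2 - INR k) * h) by field.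
  rewrite Hf.
  assert (E : (-1) ^ (n - k) = (-1) ^ n * (-1) ^ k).
  { rewrite <- (Rmult_1_r ((-1) ^ (n - k))), <- (pow_m1_sq k), <- Rmult_assoc,
      <- pow_add. f_equal. f_equal. lia. }
  rewrite E. pose proof (pow_m1_sq n) as Sn.
  set (u := (-1) ^ n) in *.
  replace (u * (-1) ^ k * C n k * - (u * f (x + (INR n / 2 - INR k) * h)))
    with (- (u * u) * ((-1) ^ k * C n k * f (x + (INR n / 2 - INR k) * h))) by ring.
  rewrite Sn. ring.
Qed.

Definition sgn_pow (n : nat) (y : R) : R := y ^ (n - 1) * Rabs y.

Lemma sgn_pow_opp (n : nat) (y : R) : (1 <= n)%nat ->
  sgn_pow n (- y) = - ((-1) ^ n * sgn_pow n y).
Proof.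
  intro hn. unfold sgn_pow. rewrite Rabs_Ropp.
  replace (- y) with (-1 * y) by ring. rewrite Rpow_mult_distr.
  replace n with (S (n - 1)) at 3 by lia. simpl. ring.
Qed.

Lemma sgn_pow_pos (n : nat) (y : R) : (1 <= n)%nat -> 0 <= y ->
  sgn_pow n y = y ^ n.
Proof.
  intros hn hy. unfold sgn_pow. rewrite Rabs_pos_eq by assumption.
  replace n with (S (n - 1)) at 2 by lia. simpl. ring.
Qed.

Lemma Rabs_sgn_pow (n : nat) (y : R) : (1 <= n)%nat ->
  Rabs (sgn_pow n y) = Rabs y ^ n.
Proof.
  intro hn. unfold sgn_pow. rewrite Rabs_mult, Rabs_Rabsolu, <- RPow_abs.
  replace n with (S (n - 1)) at 2 by lia. simpl. ring.
Qed.

Lemma sym_diff_sgn_pow (n : nat) (h : R) : (1 <= n)%nat ->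
  sym_diff n (sgn_pow n) 0 h = 0.
Proof.
  intro hn. apply sym_diff_eq0. intro y.
  rewrite !Rplus_0_l, <- sgn_pow_opp by assumption. f_equal. ring.
Qed.

Lemma not_peano_sgn_pow (n : nat) : (1 <= n)%nat ->
  ~ peano_exists n (sgn_pow n) 0.
Proof.
  intro hn.
  apply (not_peano_exists_of_two_ratios _ _ _ 1 1 (-1)); [lra | | |].
  - intros h _ _. rewrite Rplus_0_l, Rabs_sgn_pow by assumption. lra.
  - intros d dpos. exists (d / 2).
    rewrite Rplus_0_l, Rabs_pos_eq, sgn_pow_pos by (assumption || lra).
    split; [lra | split; [lra | ring]].
  - intros d dpos. exists (- (d / 2)).
    rewrite Rplus_0_l, Rabs_Ropp, Rabs_pos_eq, sgn_pow_opp, sgn_pow_pos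
      by (assumption || lra).
    split; [lra | split; [lra|]].
    replace (- (d / 2)) with (-1 * (d / 2)) by ring. rewrite Rpow_mult_distr. ring.
Qed.

(* The integer exponents a - c, b - d have the parity of a + b + c + d. *)
Definition ratio23 (a b c d : nat) : R := 2 ^ a * 3 ^ b / (2 ^ c * 3 ^ d).

Lemma pow3_odd (k : nat) : Nat.odd (3 ^ k) = true.
Proof.
  induction k as [|k IH]; [reflexivity|].
  rewrite Nat.pow_succ_r', Nat.odd_mul, IH. reflexivity.
Qed.

Lemma pow2_pow3_inj : forall a b c d : nat,
  (2 ^ a * 3 ^ b = 2 ^ c * 3 ^ d)%nat -> a = c /\ b = d.
Proof.
  induction a as [|a IH]; intros b c d H; destruct c as [|c].
  2, 3: exfalso; apply (f_equal Nat.odd) in H;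
    rewrite Nat.pow_succ_r', <- Nat.mul_assoc, !Nat.odd_mul in H; simpl in H;
    rewrite pow3_odd in H; discriminate.
  - split; [reflexivity|]. rewrite !Nat.mul_1_l in H. apply (Nat.pow_inj_r 3); [lia | exact H].
  - rewrite !Nat.pow_succ_r' in H. destruct (IH b c d) as [-> ->]; [lia|auto].
Qed.

Lemma ratio23_parity (a b c d a' b' c' d' : nat) :
  ratio23 a b c d = ratio23 a' b' c' d' ->
  (-1) ^ (a + b + c + d) = (-1) ^ (a' + b' + c' + d').
Proof.
  unfold ratio23. intro H.
  assert (n2 : forall k, 2 ^ k <> 0) by (intro; apply pow_nonzero; lra).
  assert (n3 : forall k, 3 ^ k <> 0) by (intro; apply pow_nonzero; lra).
  assert (H' : 2 ^ (a + c') * 3 ^ (b + d') = 2 ^ (a' + c) * 3 ^ (b' + d)).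
  { rewrite !pow_add.
    apply (f_equal (fun z => z * (2 ^ c * 3 ^ d) * (2 ^ c' * 3 ^ d'))) in H.
    field_simplify in H; auto; lra. }
  replace 2 with (INR 2) in H' by reflexivity.
  replace 3 with (INR 3) in H' by (simpl; ring).
  rewrite <- !pow_INR, <- !mult_INR in H'.
  apply INR_eq, pow2_pow3_inj in H' as [e1 e2].
  assert (E : forall m, (-1) ^ (2 * m) = 1)
    by (intro m; rewrite pow_mult; replace ((-1) ^ 2) with 1 by ring; apply pow1).
  assert (K : ((a + b + c + d) + 2 * (c' + d') = (a' + b' + c' + d') + 2 * (c + d))%nat)
    by lia.
  apply (f_equal (fun m => (-1) ^ m)) in K.
  rewrite (pow_add _ (a + b + c + d)), (pow_add _ (a' + b' + c' + d')), !E in K. lra.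
Qed.

Definition sign23 (h s : R) : Prop :=
  exists a b c d, h = ratio23 a b c d /\ s = (-1) ^ (a + b + c + d).

Lemma sign23_fun (h s s' : R) : sign23 h s -> sign23 h s' -> s = s'.
Proof.
  intros [a [b [c [d [-> ->]]]]] [a' [b' [c' [d' [E ->]]]]].
  apply ratio23_parity, E.
Qed.

Definition chi23 (h : R) : R :=
  match excluded_middle_informative (exists s, sign23 h s) with
  | left H => proj1_sig (constructive_indefinite_description _ H)
  | right _ => 0
  end.

Lemma chi23_sign (h s : R) : sign23 h s -> chi23 h = s.
Proof.
  intro Hs. unfold chi23.
  destruct (excluded_middle_informative _) as [H|H].
  - destruct (constructive_indefinite_description _ H) as [s' Hs']. simpl.
    exact (sign23_fun _ _ _ Hs' Hs).
  - exfalso. apply H. exists s. exact Hs.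
Qed.

Lemma chi23_out (h : R) : ~ (exists s, sign23 h s) -> chi23 h = 0.
Proof.
  intro H. unfold chi23. destruct (excluded_middle_informative _); [contradiction|].
  reflexivity.
Qed.

Lemma sign23_mul (m h s : R) : m = 2 \/ m = 3 ->
  (sign23 h s -> sign23 (m * h) (- s)) /\ (sign23 (m * h) s -> sign23 h (- s)).
Proof.
  assert (n2 : forall k, 2 ^ k <> 0) by (intro; apply pow_nonzero; lra).
  assert (n3 : forall k, 3 ^ k <> 0) by (intro; apply pow_nonzero; lra).
  intro Hm. split; intros [a [b [c [d [Eh ->]]]]].
  - destruct Hm as [-> | ->]; [exists (S a), b, c, d | exists a, (S b), c, d];
      (split; [rewrite Eh; unfold ratio23; simpl; field; auto|]).
    + simpl. ring.
    + replace (a + S b + c + d)%nat with (S (a + b + c + d)) by lia. simpl. ring.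
  - assert (Eh' : h = ratio23 a b c d / m)
      by (rewrite <- Eh; field; destruct Hm; lra).
    destruct Hm as [-> | ->]; [exists a, b, (S c), d | exists a, b, c, (S d)];
      (split; [rewrite Eh'; unfold ratio23; simpl; field; auto|]).
    + replace (a + b + S c + d)%nat with (S (a + b + c + d)) by lia. simpl. ring.
    + replace (a + b + c + S d)%nat with (S (a + b + c + d)) by lia. simpl. ring.
Qed.

Lemma chi23_mul (m h : R) : m = 2 \/ m = 3 -> chi23 (m * h) = - chi23 h.
Proof.
  intro Hm. destruct (classic (exists s, sign23 h s)) as [[s Hs]|H].
  - rewrite (chi23_sign h s Hs). apply chi23_sign, (sign23_mul m h s Hm), Hs.
  - rewrite (chi23_out h H), chi23_out; [ring|].
    intros [s Hs]. apply H. exists (- s). apply (sign23_mul m h s Hm), Hs.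
Qed.

Lemma Rabs_chi23_le1 (h : R) : Rabs (chi23 h) <= 1.
Proof.
  destruct (classic (exists s, sign23 h s)) as [[s Hs]|H].
  - rewrite (chi23_sign h s Hs). destruct Hs as [a [b [c [d [_ ->]]]]].
    rewrite <- RPow_abs. replace (Rabs (-1)) with 1 by (rewrite Rabs_left; lra).
    rewrite pow1. lra.
  - rewrite chi23_out, Rabs_R0 by assumption. lra.
Qed.

Lemma chi23_pow_half (k : nat) : chi23 ((/ 2) ^ k) = (-1) ^ k.
Proof.
  apply chi23_sign. exists 0%nat, 0%nat, k, 0%nat. split.
  - unfold ratio23. rewrite pow_inv. simpl. field. apply pow_nonzero. lra.
  - f_equal. lia.
Qed.

Definition cube_chi23 (y : R) : R := y ^ 3 * chi23 y.

Lemma fwd_diff_3 (f : R -> R) (x h : R) :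
  fwd_diff 3 f x h = f (x + 3 * h) - 3 * f (x + 2 * h) + 3 * f (x + h) - f x.
Proof.
  unfold fwd_diff, C. simpl.
  replace (x + 0 * h) with x by ring. replace (x + 1 * h) with (x + h) by ring.
  replace (x + (1 + 1) * h) with (x + 2 * h) by ring.
  replace (x + (1 + 1 + 1) * h) with (x + 3 * h) by ring.
  field.
Qed.

Lemma pow_half_lt (d : R) : 0 < d ->
  exists N : nat, forall k, (N <= k)%nat -> (/ 2) ^ k < d.
Proof.
  intro dpos.
  destruct (pow_lt_1_zero (/ 2) ltac:(rewrite Rabs_pos_eq; lra) d dpos) as [N HN].
  exists N. intros k hk. specialize (HN k hk).
  rewrite Rabs_pos_eq in HN by (apply pow_le; lra). exact HN.
Qed.

Lemma cube_chi23_ratio (e : nat) (d : R) : 0 < d ->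
  exists h, h <> 0 /\ Rabs h < d /\ cube_chi23 (0 + h) = (-1) ^ e * h ^ 3.
Proof.
  intro dpos. destruct (pow_half_lt d dpos) as [N HN].
  assert (0 < (/ 2) ^ (2 * N + e)) by (apply pow_lt; lra).
  exists ((/ 2) ^ (2 * N + e)). split; [lra|]. split.
  - rewrite Rabs_pos_eq by lra. apply HN. lia.
  - rewrite Rplus_0_l. unfold cube_chi23. rewrite chi23_pow_half, (pow_add (-1)), pow_mult.
    replace ((-1) ^ 2) with 1 by ring. rewrite pow1. ring.
Qed.

Lemma Rabs_cube_chi23 (h : R) : Rabs (cube_chi23 h) <= Rabs h ^ 3.
Proof.
  unfold cube_chi23. rewrite Rabs_mult, <- RPow_abs.
  pose proof (Rabs_chi23_le1 h).
  assert (0 <= Rabs h ^ 3) by (apply pow_le, Rabs_pos). nra.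
Qed.

Lemma fwd_diff_cube_chi23 (h : R) : fwd_diff 3 cube_chi23 0 h = 0.
Proof.
  rewrite fwd_diff_3. unfold cube_chi23.
  rewrite !Rplus_0_l, !chi23_mul by auto. ring.
Qed.

Lemma not_peano_cube_chi23 : ~ peano_exists 3 cube_chi23 0.
Proof.
  apply (not_peano_exists_of_two_ratios _ _ _ 1 ((-1) ^ 0) ((-1) ^ 1)).
  - simpl. lra.
  - intros h _ _. rewrite Rplus_0_l, Rmult_1_l. apply Rabs_cube_chi23.
  - apply cube_chi23_ratio.
  - apply cube_chi23_ratio.
Qed.

Theorem theorem1 :
  (forall n : nat, (3 <= n)%nat ->
     exists (f : R -> R) (x : R),
       peano_exists (n - 1) f x /\ sym_riemann_exists n f x /\ ~ peano_exists n f x) /\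
  (exists (f : R -> R) (x : R),
       peano_exists 2 f x /\ riemann_exists 3 f x /\ ~ peano_exists 3 f x).
Proof.
  split.
  - intros n hn. exists (sgn_pow n), 0. split; [|split].
    + apply (peano_exists_of_bigO_pow_S _ _ _ 1).
      * unfold sgn_pow. rewrite Rabs_R0. ring.
      * intro h. replace (S (n - 1)) with n by lia.
        rewrite Rplus_0_l, Rabs_sgn_pow by lia. lra.
    + apply lim0_exists_of_eq0. intro h.
      rewrite sym_diff_sgn_pow by lia. unfold Rdiv. ring.
    + apply not_peano_sgn_pow. lia.
  - exists cube_chi23, 0. split; [|split].
    + apply (peano_exists_of_bigO_pow_S _ _ _ 1).
      * unfold cube_chi23. ring.
      * intro h. rewrite Rplus_0_l, Rmult_1_l. apply Rabs_cube_chi23.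
    + apply lim0_exists_of_eq0. intro h.
      rewrite fwd_diff_cube_chi23. unfold Rdiv. ring.
    + exact not_peano_cube_chi23.
Qed.
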